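(* Let $D$ be a finite set with $|D|\ge2$, $k\ge2$, and let $P:D^k\to\{0,1\}$ be a $k$-ary predicate with $P^{-1}(1)=\{(a,a,\dots,a)\}$ for some $a\in D$. Then for every weighted directed $k$-uniform hypergraph $H=(V,E,w)$, every $0<\varepsilon<1$, and every $\varepsilon$-$P$-sparsifier $H_\varepsilon=(V,E_\varepsilon,w_\varepsilon)$ of $H$, we have $|E_\varepsilon|=\Omega(|E|)$, with the implied constant independent of $H$ and $\varepsilon$.
   Context: A weighted directed $k$-uniform hypergraph $H=(V,E,w)$ has $E$ a set of ordered $k$-tuples of distinct vertices and $w:E\to\mathbb{R}_{>0}$. For $A:V\to D$, $\mathrm{Val}_{H,P}(A)=\sum_{e\in E}w(e)P(A(e))$ with $A$ applied entrywise. An $\varepsilon$-$P$-sparsifier of $H$ is $H_\varepsilon=(V,E_\varepsilon,w_\varepsilon)$ with $E_\varepsilon\subseteq E$, $w_\varepsilon:E_\varepsilon\to\mathbb{R}_{>0}$, such that for every $A:V\to D$, $(1-\varepsilon)\mathrm{Val}_{H,P}(A)\le\mathrm{Val}_{H_\varepsilon,P}(A)\le(1+\varepsilon)\mathrm{Val}_{H,P}(A)$. *)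

From HB Require Import structures.
From mathcomp Require Import all_boot all_order all_algebra.
From mathcomp Require Import reals.
Set Implicit Arguments. Unset Strict Implicit. Unset Printing Implicit Defensive.
Import Order.TTheory GRing.Theory Num.Theory.
Local Open Scope ring_scope.

Definition is_wdhypergraph (R : realType) (V : finType) (k : nat)
    (E : {set k.-tuple V}) (w : k.-tuple V -> R) : Prop :=
  (forall e, e \in E -> uniq e) /\ (forall e, e \in E -> 0 < w e).

Definition Val (R : realType) (V D : finType) (k : nat)
    (E : {set k.-tuple V}) (w : k.-tuple V -> R)
    (P : k.-tuple D -> bool) (A : V -> D) : R :=
  \sum_(e in E) w e * (P (map_tuple A e))%:R.

Definition is_sparsifier (R : realType) (V D : finType) (k : nat)
    (P : k.-tuple D -> bool) (eps : R)
    (E : {set k.-tuple V}) (w : k.-tuple V -> R)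
    (Eeps : {set k.-tuple V}) (weps : k.-tuple V -> R) : Prop :=
  Eeps \subset E /\ (forall e, e \in Eeps -> 0 < weps e) /\
  forall A : V -> D,
    (1 - eps) * Val E w P A <= Val Eeps weps P A /\
    Val Eeps weps P A <= (1 + eps) * Val E w P A.

From HB Require Import structures.
From mathcomp Require Import all_boot all_order all_algebra.
From mathcomp Require Import reals.
Import Order.TTheory GRing.Theory Num.Theory.
Local Open Scope ring_scope.

(* For an edge e of H, the assignment sending the vertices of e to a and all
   other vertices to some b <> a satisfies P exactly on the edges whose
   vertices all lie in e.  It gives e a positive value, so a sparsifier must
   keep such an edge e'; since edges have k distinct vertices, e' is a
   reordering of e.  Hence e is determined by e' together with the positions
   of its vertices in e', and |E| <= (k+1)^k |E_eps|. *)

Lemma card_tuples_covered_le (V : finType) (k : nat) (E F : {set k.-tuple V}) :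
    (forall e, e \in E -> exists2 e', e' \in F & {subset e <= e'}) ->
  (#|E| <= #|F| * k.+1 ^ k)%N.
Proof.
move=> cover.
pose cov (e : k.-tuple V) := odflt e [pick e' in F | all (fun x => x \in e') e].
have covP e : e \in E -> (cov e \in F) && all (fun x => x \in cov e) e.
  move=> /cover[e' e'F sub_e]; rewrite /cov; case: pickP => [e'' /= -> //|no].
  by have := no e'; rewrite e'F; move/allP: sub_e => ->.
(* Positions live in 'I_k.+1 so that [inord] needs no membership proof, and
   are decoded with [onth] so that no default vertex is needed. *)
pose pos (e : k.-tuple V) : k.-tuple 'I_k.+1 :=
  [tuple of map (fun x => inord (index x (cov e))) e].
pose enc (e : k.-tuple V) := (cov e, pos e).
have decode e : e \in E -> map (onth (cov e)) (map val (pos e)) = map Some e.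
  move=> /covP/andP[_ /allP sub_e]; rewrite /= -!map_comp.
  apply/eq_in_map => x xe /=; rewrite inordK; last first.
    by rewrite ltnS -[k in (_ <= k)%N](size_tuple (cov e)) index_size.
  by rewrite onthE (nth_map x) ?nth_index ?index_mem ?sub_e.
have enc_inj : {in E &, injective enc}.
  move=> e1 e2 e1E e2E enc12; apply/val_inj/(inj_map Some_inj).
  have cov12 : cov e1 = cov e2 := congr1 fst enc12.
  have pos12 : pos e1 = pos e2 := congr1 snd enc12.
  by rewrite -decode // -decode // cov12 pos12.
have -> : (#|F| * k.+1 ^ k = #|setX F [set: k.-tuple 'I_k.+1]|)%N.
  by rewrite cardsX cardsT card_tuple card_ord.
rewrite -(card_in_imset enc_inj).
apply/subset_leq_card/subsetP => _ /imsetP[e eE ->].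
by rewrite in_setX in_setT andbT; case/andP: (covP e eE).
Qed.

Section Satisfiability.

Context {R : realType} {V D : finType} {k : nat} {P : k.-tuple D -> bool}.

Lemma Val_gt0 {E : {set k.-tuple V}} {w : k.-tuple V -> R} (A : V -> D) :
    (forall e, e \in E -> 0 < w e) ->
  (0 < Val E w P A) = [exists e in E, P (map_tuple A e)].
Proof.
move=> w_gt0; case: exists_inP => [[e eE Pe] | noP].
  rewrite /Val (bigD1 e) //= Pe mulr1 ltr_wpDr ?w_gt0 //.
  by apply: sumr_ge0 => e' /andP[e'E _]; rewrite mulr_ge0 ?ler0n ?ltW ?w_gt0.
rewrite /Val big1 ?ltxx // => e eE.
by case: (boolP (P _)) => [Pe | _]; [case: noP; exists e | rewrite mulr0].
Qed.

Lemma sparsifier_satisfiable {eps : R} {E Eeps : {set k.-tuple V}}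
    {w weps : k.-tuple V -> R} {A : V -> D} :
    is_sparsifier P eps E w Eeps weps -> eps < 1 ->
    (forall e, e \in E -> 0 < w e) ->
    [exists e in E, P (map_tuple A e)] -> [exists e in Eeps, P (map_tuple A e)].
Proof.
move=> [_ [weps_gt0 approx]] eps_lt1 w_gt0.
rewrite -(Val_gt0 A w_gt0) -(Val_gt0 A weps_gt0) => Val_gt0.
apply: lt_le_trans (proj1 (approx A)).
by rewrite mulr_gt0 ?subr_gt0.
Qed.

End Satisfiability.

Lemma map_indicator_const {T D : eqType} {a b : D} (e s : seq T) : b != a ->
  (map (fun x => if x \in e then a else b) s == nseq (size s) a)
  = all (fun x => x \in e) s.
Proof.
move=> ba; rewrite -(size_map (fun x => if x \in e then a else b)).
apply/eqP/idP => [/all_pred1P|]; first rewrite all_map.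
  by apply: sub_all => x /=; case: (x \in e); rewrite ?eqxx // (negPf ba).
move=> s_e; apply/all_pred1P; rewrite all_map.
by apply: sub_all s_e => x /= ->.
Qed.

Theorem proposition18 (R : realType) (D : finType) (k : nat)
    (P : k.-tuple D -> bool) (a : D) :
  (1 < #|D|)%N -> (2 <= k)%N ->
  (forall x : k.-tuple D, P x = (x == [tuple of nseq k a])) ->
  exists c : R, 0 < c /\
    forall (V : finType) (E : {set k.-tuple V}) (w : k.-tuple V -> R)
      (eps : R) (Eeps : {set k.-tuple V}) (weps : k.-tuple V -> R),
      is_wdhypergraph E w -> 0 < eps -> eps < 1 ->
      is_sparsifier P eps E w Eeps weps ->
      c * #|E|%:R <= #|Eeps|%:R.
Proof.
move=> /card_gt1P[x [y [_ _ xy]]] _ Pconst.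
have [b ba] : exists b, b != a.
  by case: (eqVneq x a) => [xa | ?]; [exists y; rewrite -xa eq_sym | exists x].
exists (k.+1 ^ k)%:R^-1; split; first by rewrite invr_gt0 ltr0n expn_gt0.
move=> V E w eps Eeps weps [E_uniq w_gt0] _ eps_lt1 spE.
rewrite mulrC ler_pdivrMr ?ltr0n ?expn_gt0 // -natrM ler_nat.
apply: card_tuples_covered_le => e eE.
pose Ae v := if v \in e then a else b.
have Pind t : P (map_tuple Ae t) = all (fun v => v \in e) t.
  by rewrite Pconst -val_eqE /= -(map_indicator_const e t ba) size_tuple.
have /exists_inP[e' e'Eeps] : [exists e' in Eeps, P (map_tuple Ae e')].
  apply: (sparsifier_satisfiable spE eps_lt1 w_gt0).
  by apply/exists_inP; exists e; rewrite // Pind; apply/allP.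
rewrite Pind => /allP e'_e; exists e' => //.
have e'_uniq : uniq e' by apply/E_uniq/(subsetP (proj1 spE)).
have [|_ e'_eq_e] := uniq_min_size e'_uniq e'_e; first by rewrite !size_tuple.
by move=> v; rewrite e'_eq_e.
Qed.
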